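(* Let $f:\mathbb R\to(-\infty,\infty]$ be convex, finite for some $\theta>0$ and infinite for all $\theta<0$. Let $\Gamma=\Gamma(f^* )$, $\vartheta=\vartheta(f)$ and $\underline\psi=\inf\Phi_f$. Then $f^\natural\equiv-\infty$ and $\vartheta=-\infty$ when $\Gamma=-\infty$. Otherwise $\vartheta\ge0$ and $f^\natural(\theta)=f(\theta)$ for $0\le\theta<\vartheta$. When $0\le\vartheta<\infty$, $f^\natural(\theta)=\theta\Gamma<f(\theta)$ for $\theta>\vartheta$, and \[f^\natural(\vartheta)=\begin{cases} f(\vartheta)\ge\mathrm{cl}\,f(\vartheta)=\vartheta\Gamma & \text{when }\vartheta=\underline\psi,\\ \vartheta\Gamma=\mathrm{cl}\,f(\vartheta)\le f(\vartheta)&\text{when }\vartheta>\underline\psi.\end{cases}\] In all cases \[\Gamma=\inf_{\theta>0}\frac{f^\natural(\theta)}{\theta}=\inf_{\theta>0}\frac{f(\theta)}{\theta}.\] When $0\le\vartheta<\infty$, $\Gamma=f(\vartheta)/\vartheta$ provided $f$ is lower semicontinuous at $\vartheta$, and when $\vartheta=\infty$, $\Gamma=\lim_{\theta\uparrow\infty}f(\theta)/\theta$.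
   Context: $\Phi_f=\{\theta:f(\theta)<\infty\}$. $f^*(x)=\sup_\theta\{\theta x-f(\theta)\}$; $\Gamma(g)=\inf\{a:g(a)>0\}$. $f^\natural$ is the maximal convex function with $f^\natural\le f$ and $f^\natural(\theta)/\theta$ decreasing in $\theta\in(0,\infty)$ (identically $-\infty$ if no function satisfies these constraints); $\vartheta(f)=\sup\{\theta:f(\theta)=f^\natural(\theta)\}$ (possibly $+\infty$, and $-\infty$ if the set is empty). $\mathrm{cl}\,f$ is the closure of $f$: the lower semicontinuous convex function obtained by adjusting the values of $f$ at the end-points of the interval $\Phi_f$ so as to make it lower semicontinuous. *)

From HB Require Import structures.
From mathcomp Require Import all_boot all_order all_algebra.
From mathcomp Require Import all_classical all_reals all_analysis.
Set Implicit Arguments. Unset Strict Implicit. Unset Printing Implicit Defensive.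
Import Order.TTheory GRing.Theory Num.Theory.
Import numFieldNormedType.Exports.
Local Open Scope classical_set_scope.
Local Open Scope ring_scope.
Local Open Scope ereal_scope.

Section Defs.
Variable R : realType.

Definition econvex (g : R -> \bar R) : Prop :=
  forall (x y t : R), (0 < t < 1)%R ->
    g (t * x + (1 - t) * y)%R <= t%:E * g x + (1 - t)%:E * g y.

Definition Phi (f : R -> \bar R) : set R := [set t | f t < +oo].

Definition conj (f : R -> \bar R) (x : R) : \bar R :=
  ereal_sup [set (t * x)%:E - f t | t in [set: R]].

Definition Gam (g : R -> \bar R) : \bar R :=
  ereal_inf [set a%:E | a in [set a : R | 0 < g a]].

Definition ratio_decr (g : R -> \bar R) : Prop :=
  forall x y : R, (0 < x)%R -> (x <= y)%R -> g y * (y^-1)%:E <= g x * (x^-1)%:E.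

Definition nat_admissible (f g : R -> \bar R) : Prop :=
  [/\ forall x, g x != -oo, econvex g, (forall x, g x <= f x) & ratio_decr g].

(* f^natural: the maximal admissible function (pointwise supremum of all
   admissible functions, which is itself admissible); identically -oo when
   there is no admissible function *)
Definition fnat (f : R -> \bar R) (t : R) : \bar R :=
  ereal_sup [set g t | g in nat_admissible f].

Definition vtheta (f : R -> \bar R) : \bar R :=
  ereal_sup [set t%:E | t in [set t : R | f t = fnat f t]].

(* closure cl f = lower semicontinuous hull: cl f(x) = liminf_{y -> x} f y
   (including y = x); for convex f this only adjusts values at the
   end-points of Phi_f *)
Definition clf (f : R -> \bar R) (x : R) : \bar R :=
  ereal_sup [set ereal_inf [set f y | y in [set y : R | (`|y - x| < e)%R]]
            | e in [set e : R | (0 < e)%R]].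

Definition lsc_at (f : R -> \bar R) (x : R) : Prop :=
  forall a : \bar R, a < f x -> \forall y \near x, a < f y.

End Defs.

(* Write Gamma = inf_{t > 0} f t / t; comparing with the definition of the
   Legendre transform shows that this is Gam (conj f).  When Gamma is finite,
   h t = f t - Gamma t is convex, nonnegative and satisfies inf_{t > 0} h t / t = 0,
   and f^natural t = Gamma t + M t with M t = inf_{0 <= x <= t} h x.  Indeed the
   right-hand side is admissible (M is convex, nonnegative and nonincreasing),
   while any admissible g satisfies g t <= g x + Gamma (t - x) for 0 <= x <= t,
   because g y / y decreases to at most Gamma and g is convex.  Hence f and
   f^natural agree exactly where h equals its running infimum M, an initial
   segment by convexity, so its supremum is vartheta.  Beyond vartheta, h has
   strictly increased, so it grows linearly unless M = 0; the condition
   inf h t / t = 0 forces M = 0 there, i.e. f^natural t = Gamma t.  The closure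
   and limit statements follow since h is small near vartheta and f t / t is
   nonincreasing when vartheta = +oo.  When Gamma = -oo, the same slope bound
   leaves no admissible function at all. *)

From HB Require Import structures.
From mathcomp Require Import all_boot all_order all_algebra.
From mathcomp Require Import all_classical all_reals all_analysis.
From mathcomp Require Import lra.
Import Order.TTheory GRing.Theory Num.Theory.
Import numFieldNormedType.Exports.
Local Open Scope classical_set_scope.
Local Open Scope ring_scope.
Local Open Scope ereal_scope.
Set Implicit Arguments. Unset Strict Implicit. Unset Printing Implicit Defensive.

Section ExtendedConvexity.
Variable R : realType.
Implicit Types (g : R -> \bar R) (u v : \bar R).

Lemma neqNy_cases u : u != -oo -> u = +oo \/ exists a : R, u = a%:E.
Proof. by case: u => [a _|_|//]; [right; exists a | left]. Qed.

Lemma conv_comb_eqy (l : R) u v : (0 < l < 1)%R -> u != -oo -> v != -oo ->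
  u = +oo \/ v = +oo -> l%:E * u + (1 - l)%:E * v = +oo.
Proof.
move=> /andP[l0 l1] uN vN [->|->].
  rewrite gt0_muley ?lte_fin // addye //.
  by case: v vN => [r||] //= _; rewrite ?gt0_muley ?lte_fin ?subr_gt0.
rewrite gt0_muley ?lte_fin ?subr_gt0 // addey //.
by case: u uN => [r||] //= _; rewrite ?gt0_muley ?lte_fin.
Qed.

Lemma econvex_between g (x t y : R) : econvex g -> (x < t)%R -> (t < y)%R ->
  exists mu : R, [/\ (0 < mu < 1)%R, (mu * (y - x) = t - x)%R &
                     g t <= (1 - mu)%:E * g x + mu%:E * g y].
Proof.
move=> g_cvx xt ty; have yx : (0 < y - x)%R by lra.
pose mu := ((t - x) / (y - x))%R.
have muE : (mu * (y - x) = t - x)%R by rewrite /mu divfK ?gt_eqF.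
have mu0 : (0 < mu)%R by apply: divr_gt0; lra.
have mu1 : (mu < 1)%R by rewrite /mu ltr_pdivrMr // mul1r; lra.
exists mu; split => //; first by apply/andP.
have l01 : (0 < 1 - mu < 1)%R by apply/andP; split; lra.
have := g_cvx x y _ l01.
have -> : (1 - (1 - mu) = mu)%R by lra.
suff -> : ((1 - mu) * x + mu * y = t)%R by [].
by rewrite mulrBl mul1r; move: muE; rewrite mulrBr; lra.
Qed.

(* The chord from [(x, a)] to a far point [(y, g y)] with [g y <= c y] has
   slope close to [c < K]. *)
Lemma econvex_le_of_slope_at_infty g (x th s a c K : R) :
  econvex g -> (forall t, g t != -oo) -> g x = a%:E -> (x < th)%R -> (c < K)%R ->
  (forall y, (s <= y)%R -> g y <= (c * y)%:E) -> g th <= (a + (th - x) * K)%:E.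
Proof.
move=> g_cvx gN gx xth cK g_le.
pose y := Num.max (Num.max s (th + 1)%R) ((K * x - a) / (K - c))%R.
have sy : (s <= y)%R by rewrite /y !le_max lexx.
have thy : (th + 1 <= y)%R by rewrite /y !le_max lexx orbT.
have Ky : ((K * x - a) / (K - c) <= y)%R by rewrite /y !le_max lexx orbT.
rewrite ler_pdivrMr ?subr_gt0 // in Ky.
have thy' : (th < y)%R by lra.
have [mu [/andP[mu0 mu1] muE hmu]] := econvex_between g_cvx xth thy'.
move: hmu (g_le y sy); case: (neqNy_cases (gN y)) => [->|[d ->]]; first by rewrite leye_eq.
rewrite gx -!EFinM -EFinD => hmu dy; move: hmu.
case: (neqNy_cases (gN th)) => [->|[e ->]]; first by rewrite leye_eq.
rewrite !lee_fin in dy * => he.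
have h1 : (mu * d <= mu * (c * y))%R by apply: ler_wpM2l => //; exact: ltW.
have h2 : (mu * (c * y - a) <= mu * (K * (y - x)))%R by apply: ler_wpM2l; [exact: ltW | nra].
have h3 : (mu * (K * (y - x)) = (th - x) * K)%R by rewrite mulrCA muE mulrC.
nra.
Qed.

Lemma econvex_linear_growth g (x t a : R) : econvex g -> g x = a%:E -> a%:E < g t ->
  (x < t)%R -> exists2 c : R, (0 < c)%R &
    forall y d : R, (t < y)%R -> g y = d%:E -> (a + c * (y - x) <= d)%R.
Proof.
move=> g_cvx gx agt xt; have gtN : g t != -oo by rewrite gt_eqF // (lt_trans (ltNyr a) agt).
case: (neqNy_cases gtN) => [gty|[b gtE]].
  exists 1%R => // y d ty gy; have [mu [_ _]] := econvex_between g_cvx xt ty.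
  by rewrite gty gx gy -!EFinM -EFinD leye_eq.
have ab : (a < b)%R by rewrite -lte_fin -gtE.
exists ((b - a) / (t - x))%R; first by apply: divr_gt0; lra.
move=> y d ty gy; have [mu [/andP[mu0 mu1] muE]] := econvex_between g_cvx xt ty.
rewrite gtE gx gy -!EFinM -EFinD lee_fin => hb.
have cE : ((b - a) / (t - x) * (t - x) = b - a)%R by rewrite divfK // gt_eqF // subr_gt0.
have : (mu * ((b - a) / (t - x) * (y - x)) <= mu * (d - a))%R.
  by rewrite mulrCA muE cE; lra.
by rewrite ler_pM2l //; lra.
Qed.

Lemma econvex_eq0_of_eq0_right g (p v : R) : econvex g -> (forall t, 0 <= g t) ->
  (p < v)%R -> g p < +oo -> (forall t, (v < t)%R -> g t = 0) -> g v = 0.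
Proof.
move=> g_cvx g0 pv gp g_right.
have gpN : g p != -oo by rewrite gt_eqF // (lt_le_trans ltNy0 (g0 p)).
case: (neqNy_cases gpN) => [gpy|[m gpE]].
  by rewrite gpy ltxx in gp.
have m0 : (0 <= m)%R by rewrite -lee_fin -gpE.
apply/eqP; rewrite eq_le g0 andbT; apply/lee_addgt0Pr => eps eps0; rewrite add0e.
pose l := Num.min (1 / 2)%R (eps / (m + 1))%R.
have l0 : (0 < l)%R by rewrite lt_min; apply/andP; split; [lra | apply: divr_gt0 => //; lra].
have l1 : (l < 1)%R by rewrite gt_min; apply/orP; left; lra.
have lm : (l * m <= eps)%R.
  have : (l <= eps / (m + 1))%R by rewrite ge_min lexx orbT.
  rewrite ler_pdivlMr; [nra | lra].
pose t := ((v - l * p) / (1 - l))%R.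
have tE : (t * (1 - l) = v - l * p)%R by rewrite /t divfK // gt_eqF // subr_gt0.
have vt : (v < t)%R.
  rewrite /t ltr_pdivlMr ?subr_gt0 //; nra.
have := g_cvx p t l; rewrite l0 l1 gpE /= => /(_ isT).
have -> : (l * p + (1 - l) * t = v)%R by rewrite [((1 - l) * t)%R]mulrC tE; lra.
by rewrite (g_right t vt) mule0 adde0 -EFinM => /le_trans; apply; rewrite lee_fin.
Qed.

End ExtendedConvexity.

Section Closure.
Variable R : realType.
Implicit Types g : R -> \bar R.

Lemma clf_le g x : clf g x <= g x.
Proof.
apply: ge_ereal_sup => _ [e /= e0 <-]; apply: ereal_inf_lbound.
by exists x => //=; rewrite subrr normr0.
Qed.

Lemma clf_ge_linear g (G : R) : (forall y, (G * y)%:E <= g y) ->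
  forall x, (G * x)%:E <= clf g x.
Proof.
move=> g_ge x; apply/lee_addgt0Pr => eps eps0; rewrite -leeBlDr // -EFinB.
have G1 : (0 < `|G| + 1)%R by apply: ltr_pwDr.
pose e := (eps / (`|G| + 1))%R.
have e0 : (0 < e)%R by apply: divr_gt0.
have eE : (e * (`|G| + 1) = eps)%R by rewrite /e divfK ?gt_eqF.
apply: (@le_trans _ _ (ereal_inf [set g y | y in [set y : R | (`|y - x| < e)%R]])).
  apply: le_ereal_inf_tmp => _ [y /= yx <-]; apply: le_trans (g_ge y); rewrite lee_fin.
  have : (G * (x - y) <= `|G| * e)%R.
    apply: le_trans (ler_norm _) _; rewrite normrM distrC.
    by apply: ler_wpM2l => //; exact: ltW.
  have : (0 <= `|G| * e)%R by apply: mulr_ge0 => //; exact: ltW.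
  by move: eE; rewrite mulrBr mulrDr mulr1; lra.
by apply: ereal_sup_ubound; exists e.
Qed.

Lemma clf_le_of_approx g x (c : R) :
  (forall e eps : R, (0 < e)%R -> (0 < eps)%R ->
     exists2 y, (`|y - x| < e)%R & g y <= (c + eps)%:E) ->
  clf g x <= c%:E.
Proof.
move=> approx; apply: ge_ereal_sup => _ [e /= e0 <-].
apply/lee_addgt0Pr => eps eps0; have [y yx gy] := approx e eps e0 eps0.
by apply: le_trans gy; apply: ereal_inf_lbound; exists y.
Qed.

Lemma lsc_at_le_clf g x (c : R) : lsc_at g x -> clf g x = c%:E -> g x <= c%:E.
Proof.
move=> g_lsc gxc; rewrite leNgt; apply/negP => cg.
have [a [ca ag]] : exists a : R, (c < a)%R /\ a%:E < g x.
  move: cg; case: (g x) => [b|_|//]; last by exists (c + 1)%R; split; [lra | rewrite ltry].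
  by rewrite lte_fin => cb; exists ((c + b) / 2)%R; split; rewrite ?lte_fin; lra.
have /nbhs_ballP [e /= e0 near_ag] := g_lsc _ ag.
have : a%:E <= clf g x.
  apply: (@le_trans _ _ (ereal_inf [set g y | y in [set y : R | (`|y - x| < e)%R]])).
    apply: le_ereal_inf_tmp => _ [y /= yx <-]; apply: ltW; apply: near_ag.
    by rewrite -ball_normE /ball_ /= distrC.
  by apply: ereal_sup_ubound; exists e.
by rewrite gxc lee_fin; lra.
Qed.

End Closure.

Definition running_inf (R : realType) (h : R -> \bar R) (t : R) : \bar R :=
  ereal_inf [set h x | x in [set x : R | (0 <= x <= t)%R]].

Section RunningInf.
Variables (R : realType) (h : R -> \bar R).
Hypothesis h_ge0 : forall t, 0 <= h t.
Hypothesis h_convex : econvex h.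
Local Notation M := (running_inf h).

Let h_neqNy t : h t != -oo.
Proof. by rewrite gt_eqF // (lt_le_trans ltNy0 (h_ge0 t)). Qed.

Lemma running_inf_le x t : (0 <= x)%R -> (x <= t)%R -> M t <= h x.
Proof. by move=> x0 xt; apply: ereal_inf_lbound; exists x => //; apply/andP. Qed.

Lemma running_inf_ge0 t : 0 <= M t.
Proof. by apply: le_ereal_inf_tmp => _ [x _ <-]; exact: h_ge0. Qed.

Lemma running_inf_neqNy t : M t != -oo.
Proof. by rewrite gt_eqF // (lt_le_trans ltNy0 (running_inf_ge0 t)). Qed.

Lemma running_inf_neg t : (t < 0)%R -> M t = +oo.
Proof.
move=> t0; rewrite /running_inf; suff -> : [set x : R | (0 <= x <= t)%R] = set0.
  by rewrite image_set0 ereal_inf0.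
by apply/seteqP; split => // x /= /andP[x0 xt]; lra.
Qed.

Lemma running_inf_nonincreasing s t : (s <= t)%R -> M t <= M s.
Proof.
move=> st; apply: le_ereal_inf_tmp => _ [x /andP[x0 xs] <-].
exact: running_inf_le (le_trans xs st).
Qed.

Lemma running_inf_ltP t (c : R) : M t < c%:E ->
  exists x d, [/\ (0 <= x <= t)%R, h x = d%:E & (d < c)%R].
Proof.
move=> /ereal_inf_lt [_ [x xt <-]].
case: (neqNy_cases (h_neqNy x)) => [->|[d hd]]; first by rewrite ltNge leey.
by rewrite hd lte_fin => dc; exists x, d.
Qed.

Lemma econvex_running_inf : econvex M.
Proof.
move=> a b l l01; have /andP[l0 l1] := l01.
case: (neqNy_cases (running_inf_neqNy a)) => [May|[ma Ma]].
  by rewrite conv_comb_eqy ?running_inf_neqNy ?leey //; left.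
case: (neqNy_cases (running_inf_neqNy b)) => [Mby|[mb Mb]].
  by rewrite conv_comb_eqy ?running_inf_neqNy ?leey //; right.
have a0 : (0 <= a)%R by rewrite leNgt; apply/negP => /running_inf_neg; rewrite Ma.
have b0 : (0 <= b)%R by rewrite leNgt; apply/negP => /running_inf_neg; rewrite Mb.
rewrite Ma Mb -!EFinM -EFinD; apply/lee_addgt0Pr => e e0.
have Ma_lt : M a < (ma + e)%R%:E by rewrite Ma lte_fin ltrDl.
have Mb_lt : M b < (mb + e)%R%:E by rewrite Mb lte_fin ltrDl.
have [x [dx [/andP[x0 xa] hx dxe]]] := running_inf_ltP Ma_lt.
have [y [dy [/andP[y0 yb] hy dye]]] := running_inf_ltP Mb_lt.
have z0 : (0 <= l * x + (1 - l) * y)%R by nra.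
have za : (l * x + (1 - l) * y <= l * a + (1 - l) * b)%R by nra.
apply: le_trans (running_inf_le z0 za) _; apply: le_trans (h_convex x y l01) _.
rewrite hx hy -!EFinM -!EFinD lee_fin; nra.
Qed.

(* By convexity, [h] is nonincreasing on [[0, s]] once it attains its running
   infimum at [s]. *)
Lemma running_inf_attained_le s t : (0 <= t)%R -> (t <= s)%R ->
  h s <= M s -> h t <= M t.
Proof.
move=> t0; rewrite le_eqVlt => /orP[/eqP <- //|ts] hs.
apply: le_ereal_inf_tmp => _ [x /andP[x0 xt] <-].
have [->|xt'] := eqVneq x t; first by [].
have xt2 : (x < t)%R by rewrite lt_neqAle xt' xt.
have [mu [/andP[mu0 mu1] _ hmu]] := econvex_between h_convex xt2 ts.
have hsx : h s <= h x by apply: le_trans hs (running_inf_le x0 (ltW (lt_trans xt2 ts))).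
case: (neqNy_cases (h_neqNy x)) => [->|[a hx]]; first by rewrite leey.
move: hsx hmu; rewrite hx.
case: (neqNy_cases (h_neqNy s)) => [->|[b ->]]; first by rewrite leye_eq.
case: (neqNy_cases (h_neqNy t)) => [->|[c ->]]; first by rewrite -!EFinM -EFinD leye_eq.
rewrite -!EFinM -EFinD !lee_fin => ba cab; nra.
Qed.

(* If [inf_{y > 0} h y / y = 0], a strict drop below [h t] forces [M t = 0]:
   otherwise [h] would grow at least linearly, through [M t] on [[0, t]] and
   through the chord slope beyond [t]. *)
Lemma running_inf_eq0 t :
  (forall e : R, (0 < e)%R -> exists2 y, (0 < y)%R & h y < (e * y)%:E) ->
  (0 < t)%R -> M t < h t -> M t = 0.
Proof.
move=> h_small t0 Mt_lt.
case: (neqNy_cases (running_inf_neqNy t)) => [Mty|[m Mt]].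
  by rewrite Mty ltNge leey in Mt_lt.
have m0 : (0 <= m)%R by rewrite -lee_fin -Mt running_inf_ge0.
rewrite Mt; congr EFin; apply/eqP; rewrite eq_le m0 andbT leNgt; apply/negP => m_gt0.
have [_ [x /andP[x0 xt] <-] hxt] := ereal_inf_lt Mt_lt.
have xt2 : (x < t)%R by rewrite lt_neqAle xt andbT; apply: contraTN hxt => /eqP ->; rewrite ltxx.
case: (neqNy_cases (h_neqNy x)) => [hx|[a hx]]; first by rewrite hx ltNge leey in hxt.
have ma : (m <= a)%R by rewrite -lee_fin -Mt -hx running_inf_le.
have aht : a%:E < h t by rewrite -hx.
have [c c0 grow] := econvex_linear_growth h_convex hx aht xt2.
pose e := Num.min (m / t)%R c.
have e0 : (0 < e)%R by rewrite lt_min c0 andbT divr_gt0.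
have etm : (e * t <= m)%R.
  have : (e <= m / t)%R by rewrite ge_min lexx.
  by rewrite ler_pdivlMr.
have ec : (e <= c)%R by rewrite ge_min lexx orbT.
have [y y0] := h_small e e0; apply/negP; rewrite -leNgt.
case: (leP y t) => yt.
  apply: le_trans (running_inf_le (ltW y0) yt); rewrite Mt lee_fin.
  by apply: le_trans etm; apply: ler_wpM2l => //; exact: ltW.
case: (neqNy_cases (h_neqNy y)) => [->|[d hy]]; first by rewrite leey.
rewrite hy lee_fin; have := grow y d yt hy; nra.
Qed.

End RunningInf.

Definition ratio (R : realType) (f : R -> \bar R) (t : R) : \bar R := f t * (t^-1)%:E.

Definition ratio_inf (R : realType) (f : R -> \bar R) : \bar R :=
  ereal_inf [set ratio f t | t in [set t : R | (0 < t)%R]].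

Section Proposition9.
Variables (R : realType) (f : R -> \bar R).
Hypothesis f_neqNy : forall t, f t != -oo.
Hypothesis f_convex : econvex f.
Hypothesis f_fin_pos : exists t : R, (0 < t)%R /\ f t < +oo.
Hypothesis f_neg : forall t : R, (t < 0)%R -> f t = +oo.

Lemma ratio_inf_le t : (0 < t)%R -> ratio_inf f <= ratio f t.
Proof. by move=> t0; apply: ereal_inf_lbound; exists t. Qed.

Lemma ratioE t a : (0 < t)%R -> f t = a%:E -> ratio f t = (a / t)%:E.
Proof. by move=> t0 ft; rewrite /ratio ft -EFinM. Qed.

Lemma ratio_pinfty t : (0 < t)%R -> f t = +oo -> ratio f t = +oo.
Proof. by move=> t0 ft; rewrite /ratio ft gt0_mulye // lte_fin invr_gt0. Qed.

Lemma ratio_inf_lt_pinfty : ratio_inf f < +oo.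
Proof.
case: f_fin_pos => t [t0 ft]; apply: le_lt_trans (ratio_inf_le t0) _.
case: (neqNy_cases (f_neqNy t)) => [fty|[a fa]]; first by rewrite fty ltxx in ft.
by rewrite (ratioE t0 fa) ltry.
Qed.

Lemma ratio_inf_ltP (K : R) : ratio_inf f < K%:E -> exists2 s, (0 < s)%R & ratio f s < K%:E.
Proof. by move=> /ereal_inf_lt [_ [s s0 <-] hs]; exists s. Qed.

(* [f (s t) <= (1 - s) f 0 + s f t] with [f 0 < 0] makes [f (s t) / (s t)]
   arbitrarily negative as [s] decreases to [0]. *)
Lemma ratio_inf_Ny_of_f0_lt0 c : f 0 = c%:E -> (c < 0)%R -> ratio_inf f = -oo.
Proof.
move=> f0 c0; case: f_fin_pos => t [t0 ft].
case: (neqNy_cases (f_neqNy t)) => [fty|[a fa]]; first by rewrite fty ltxx in ft.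
apply: eq_ninfty => K.
pose D := `|a - c - K * t|%R.
have D0 : (0 <= D)%R by apply: normr_ge0.
pose s := Num.min (1 / 2)%R (- c / (D + 1))%R.
have s0 : (0 < s)%R by rewrite lt_min; apply/andP; split; [lra | apply: divr_gt0; lra].
have s1 : (s < 1)%R by rewrite gt_min; apply/orP; left; lra.
have hs : (s * (a - c - K * t) <= - c)%R.
  have : (s <= - c / (D + 1))%R by rewrite ge_min lexx orbT.
  rewrite ler_pdivlMr; last by lra.
  move=> h; apply: le_trans (_ : s * D <= _)%R; last by apply: le_trans h; lra.
  by apply: ler_wpM2l; [lra | apply: ler_norm].
have := @f_convex t 0%R s; rewrite s0 s1 /= mulr0 addr0 fa f0 -!EFinM -EFinD => /(_ isT) hle.
have st0 : (0 < s * t)%R by apply: mulr_gt0.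
apply: le_trans (ratio_inf_le st0) _.
case: (neqNy_cases (f_neqNy (s * t))) => [fy|[b fb]]; first by rewrite fy leye_eq in hle.
rewrite (ratioE st0 fb) lee_fin ler_pdivrMr //; rewrite fb lee_fin in hle; nra.
Qed.

Lemma Gam_conj : Gam (conj f) = ratio_inf f.
Proof.
apply/eqP; rewrite eq_le; apply/andP; split.
- apply: le_ereal_inf_tmp => _ [t t0 <-].
  case: (neqNy_cases (f_neqNy t)) => [ft|[a fa]]; first by rewrite (ratio_pinfty t0 ft) leey.
  rewrite (ratioE t0 fa); apply/lee_addgt0Pr => e e0.
  apply: ereal_inf_lbound; exists (a / t + e)%R => //=.
  apply: (@lt_le_trans _ _ ((t * (a / t + e))%R%:E - f t)); last first.
    by apply: ereal_sup_ubound; exists t.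
  rewrite fa -EFinB lte_fin mulrDr [(t * (a / t))%R]mulrC divfK ?gt_eqF //.
  by rewrite addrAC subrr add0r mulr_gt0.
- apply: le_ereal_inf_tmp => _ [a /= ha <-].
  have [_ [t _ <-] hy] := ereal_sup_gt ha.
  case: (neqNy_cases (f_neqNy t)) => [ft|[b fb]]; first by rewrite ft /= in hy.
  rewrite fb -EFinB lte_fin subr_gt0 in hy.
  case: (ltgtP t 0%R) => [tn|tp|t0]; last subst t.
  + by rewrite f_neg in fb.
  + rewrite (le_trans (ratio_inf_le tp)) // (ratioE tp fb) lee_fin ler_pdivrMr //.
    by rewrite mulrC ltW.
  + by rewrite mul0r in hy; rewrite (ratio_inf_Ny_of_f0_lt0 fb hy) leNye.
Qed.

(* An admissible [g] lies below [f], so its decreasing ratio [g y / y] is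
   eventually below any [K > ratio_inf f]; convexity then bounds its slope by [K]. *)
Lemma admissible_growth_le g x th (K : R) : nat_admissible f g ->
  (0 <= x)%R -> (x < th)%R -> ratio_inf f < K%:E -> g th <= g x + ((th - x) * K)%:E.
Proof.
move=> [gN g_cvx g_le g_ratio] x0 xth /ratio_inf_ltP [s s0 fsK].
case: (neqNy_cases (gN x)) => [->|[a gx]]; first by rewrite addye ?leey.
have gsK : g s * (s^-1)%:E < K%:E.
  by apply: le_lt_trans fsK; apply: lee_wpmul2r => //; rewrite lee_fin invr_ge0 ltW.
case: (neqNy_cases (gN s)) => [gsy|[b gs]].
  by rewrite gsy gt0_mulye ?lte_fin ?invr_gt0 // in gsK.
rewrite gs -EFinM lte_fin in gsK.
rewrite gx -EFinD; apply: (econvex_le_of_slope_at_infty g_cvx gN gx xth gsK) => y sy.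
have y0 := lt_le_trans s0 sy.
have := g_ratio s y s0 sy; rewrite gs -EFinM.
case: (neqNy_cases (gN y)) => [->|[d ->]].
  by rewrite gt0_mulye ?lte_fin ?invr_gt0 // leye_eq.
by rewrite -EFinM !lee_fin ler_pdivrMr // mulrC.
Qed.

Lemma no_admissible_of_ratio_inf_Ny : ratio_inf f = -oo -> forall g, ~ nat_admissible f g.
Proof.
move=> ratioNy g g_adm; have [gN _ g_le _] := g_adm.
case: f_fin_pos => t [t0 ft].
case: (neqNy_cases (gN t)) => [gty|[a gt]].
  by move: (g_le t); rewrite gty leye_eq => /eqP fty; rewrite fty ltxx in ft.
have tt1 : (t < t + 1)%R by lra.
have bound (K : R) := @admissible_growth_le g t (t + 1)%R K g_adm (ltW t0) tt1.
case: (neqNy_cases (gN (t + 1)%R)) => [gty|[b gt1]].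
  by have := bound 0%R; rewrite ratioNy gty gt -EFinD leye_eq ltNyr => /(_ isT).
have := bound (b - a - 1)%R; rewrite ratioNy gt1 gt -EFinD lee_fin ltNyr => /(_ isT).
lra.
Qed.

Lemma fnat_le t : fnat f t <= f t.
Proof. by apply: ge_ereal_sup => _ [g [_ _ g_le _] <-]. Qed.

Lemma fnat_Ny : ratio_inf f = -oo -> forall t, fnat f t = -oo.
Proof.
move=> ratioNy t; apply/eqP; rewrite -leeNy_eq; apply: ge_ereal_sup => _ [g g_adm <-].
by case: (no_admissible_of_ratio_inf_Ny ratioNy g_adm).
Qed.

Lemma vtheta_Ny : ratio_inf f = -oo -> vtheta f = -oo.
Proof.
move=> ratioNy; apply/eqP; rewrite -leeNy_eq; apply: ge_ereal_sup => _ [t ft <-].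
by move: (f_neqNy t); rewrite ft fnat_Ny.
Qed.

Section FiniteRatioInf.
Variable G : R.
Hypothesis ratio_infE : ratio_inf f = G%:E.

Lemma f_ge_linear t : (G * t)%:E <= f t.
Proof.
case: (ltgtP t 0%R) => [tn|tp|t0]; first by rewrite f_neg ?leey.
  have := ratio_inf_le tp; rewrite ratio_infE.
  case: (neqNy_cases (f_neqNy t)) => [->|[a fa]]; first by rewrite leey.
  by rewrite (ratioE tp fa) fa !lee_fin ler_pdivlMr // mulrC.
subst t; rewrite mulr0; case: (neqNy_cases (f_neqNy 0)) => [->|[c f0]]; first by rewrite leey.
rewrite f0 lee_fin leNgt; apply/negP => c0.
by move: ratio_infE; rewrite (ratio_inf_Ny_of_f0_lt0 f0 c0).
Qed.

Let h t := f t - (G * t)%:E.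
Local Notation M := (running_inf h).

Let fE t : f t = (G * t)%:E + h t.
Proof. by rewrite /h addeC subeK. Qed.

Let h_ge0 t : 0 <= h t.
Proof. by rewrite /h suber_ge0 // f_ge_linear. Qed.

Let h_convex : econvex h.
Proof.
move=> x y l l01; have hN t : h t != -oo by rewrite gt_eqF // (lt_le_trans ltNy0 (h_ge0 t)).
case: (neqNy_cases (hN x)) => [hx|[a hx]].
  by rewrite conv_comb_eqy ?hN ?leey //; left.
case: (neqNy_cases (hN y)) => [hy|[b hy]].
  by rewrite conv_comb_eqy ?hN ?leey //; right.
have := f_convex x y l01; rewrite !fE hx hy.
case: (neqNy_cases (hN (l * x + (1 - l) * y)%R)) => [->|[d ->]].
  by rewrite -!EFinM -!EFinD leye_eq.
rewrite -!EFinM -!EFinD !lee_fin => hd; nra.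
Qed.

Let h_small_ratio e : (0 < e)%R -> exists2 y, (0 < y)%R & h y < (e * y)%:E.
Proof.
move=> e0; have [s s0 fs] : exists2 s, (0 < s)%R & ratio f s < (G + e)%R%:E.
  by apply: ratio_inf_ltP; rewrite ratio_infE lte_fin ltrDl.
exists s => //; case: (neqNy_cases (f_neqNy s)) => [fsy|[a fa]].
  by rewrite (ratio_pinfty s0 fsy) in fs.
rewrite (ratioE s0 fa) lte_fin ltr_pdivrMr // in fs.
by rewrite /h fa -EFinB lte_fin; lra.
Qed.

Lemma admissible_slope_le g x t : nat_admissible f g -> (0 <= x)%R -> (x <= t)%R ->
  g t <= g x + ((t - x) * G)%:E.
Proof.
move=> g_adm x0; rewrite le_eqVlt => /orP[/eqP <-|xt].
  by rewrite subrr mul0r adde0.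
have [gN _ _ _] := g_adm.
case: (neqNy_cases (gN x)) => [->|[a gx]]; first by rewrite addye ?leey.
rewrite gx; apply/lee_addgt0Pr => e e0.
have tx : (0 < t - x)%R by rewrite subr_gt0.
have := admissible_growth_le g_adm x0 xt (_ : ratio_inf f < (G + e / (t - x))%R%:E).
rewrite ratio_infE lte_fin ltrDl divr_gt0 // gx -!EFinD => /(_ isT).
by rewrite mulrDr mulrCA divff ?gt_eqF // mulr1 addrA.
Qed.

Lemma admissible_le_running_inf g t : nat_admissible f g -> g t <= (G * t)%:E + M t.
Proof.
move=> g_adm; have [_ _ g_le _] := g_adm.
case: (neqNy_cases (running_inf_neqNy h_ge0 t)) => [->|[m Mt]]; first by rewrite addey ?leey.
rewrite Mt -EFinD; apply/lee_addgt0Pr => e e0.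
have Mt_lt : M t < (m + e)%R%:E by rewrite Mt lte_fin ltrDl.
have [x [d [/andP[x0 xt] hx dm]]] := running_inf_ltP h_ge0 Mt_lt.
apply: le_trans (admissible_slope_le g_adm x0 xt) _.
apply: le_trans (leeD2r _ (g_le x)) _.
by rewrite fE hx -!EFinD lee_fin; nra.
Qed.

Lemma admissible_running_inf : nat_admissible f (fun t => (G * t)%:E + M t).
Proof.
have MN := running_inf_neqNy h_ge0.
have sumN t : (G * t)%:E + M t != -oo.
  by case: (neqNy_cases (MN t)) => [->|[m ->]]; rewrite ?addey.
split => //.
- move=> x y l l01.
  case: (neqNy_cases (MN x)) => [Mx|[mx Mx]].
    by rewrite conv_comb_eqy ?sumN ?Mx ?addey ?leey //; left.
  case: (neqNy_cases (MN y)) => [My|[my My]].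
    by rewrite conv_comb_eqy ?sumN ?My ?addey ?leey //; right.
  have := econvex_running_inf h_ge0 h_convex x y l01; rewrite Mx My.
  case: (neqNy_cases (MN (l * x + (1 - l) * y)%R)) => [->|[mz ->]].
    by rewrite -!EFinM -EFinD leye_eq.
  rewrite -!EFinM -!EFinD !lee_fin => hm; nra.
- move=> t; case: (ltP t 0%R) => t0; first by rewrite f_neg ?leey.
  by rewrite fE; apply: leeD2l; exact: running_inf_le.
- move=> x y x0 xy; have y0 := lt_le_trans x0 xy.
  case: (neqNy_cases (MN x)) => [->|[mx Mx]].
    by rewrite addey // gt0_mulye ?lte_fin ?invr_gt0 // leey.
  have := running_inf_nonincreasing h xy; have := running_inf_ge0 h_ge0 y; rewrite Mx.
  case: (neqNy_cases (MN y)) => [->|[my ->]]; first by rewrite leye_eq.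
  rewrite !lee_fin => my0 mxy.
  rewrite !mulrDl mulfK ?gt_eqF // mulfK ?gt_eqF // lerD2l.
  apply: (@le_trans _ _ (my / x)%R).
    by apply: ler_wpM2l => //; rewrite lef_pV2 ?posrE.
  by apply: ler_wpM2r => //; rewrite invr_ge0 ltW.
Qed.

Lemma fnatE t : fnat f t = (G * t)%:E + M t.
Proof.
apply/eqP; rewrite eq_le; apply/andP; split.
  by apply: ge_ereal_sup => _ [g g_adm <-]; exact: admissible_le_running_inf.
by apply: ereal_sup_ubound; exists (fun t => (G * t)%:E + M t) => //; exact: admissible_running_inf.
Qed.

Let fnat_eq_f t : M t = h t -> fnat f t = f t.
Proof. by move=> Mh; rewrite fnatE fE Mh. Qed.

Let running_inf_eq_of_fnat t : f t = fnat f t -> M t = h t.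
Proof.
rewrite fnatE fE => /eqP; rewrite eq_le => /andP[hM Mh].
by rewrite !leeD2lE // in hM Mh; apply/eqP; rewrite eq_le hM Mh.
Qed.

Lemma vtheta_ge0 : 0 <= vtheta f.
Proof.
apply: ereal_sup_ubound; exists 0%R => //=; apply/esym/fnat_eq_f.
apply/eqP; rewrite eq_le running_inf_le //=.
by apply: le_ereal_inf_tmp => _ [x /andP[x0 x0'] <-]; rewrite (@le_anti _ _ x 0%R) ?x0 ?x0'.
Qed.

Lemma fnat_eq_f_below_vtheta t : (0 <= t)%R -> t%:E < vtheta f -> fnat f t = f t.
Proof.
move=> t0 /ereal_sup_gt [_ [s /= fs <-]]; rewrite lte_fin => ts.
apply: fnat_eq_f; apply/eqP; rewrite eq_le running_inf_le //=.
apply: (running_inf_attained_le h_ge0 h_convex t0 (ltW ts)).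
by rewrite (running_inf_eq_of_fnat fs).
Qed.

Lemma running_inf_above_vtheta t : vtheta f < t%:E -> M t = 0.
Proof.
move=> vt_lt; have t0 : (0 < t)%R by rewrite -lte_fin; apply: le_lt_trans vtheta_ge0 vt_lt.
apply: (running_inf_eq0 h_ge0 h_convex h_small_ratio t0).
rewrite lt_neqAle (running_inf_le h (ltW t0) (lexx t)) andbT.
apply/negP => /eqP hM; have ft := fnat_eq_f hM.
have : t%:E <= vtheta f by apply: ereal_sup_ubound; exists t.
by rewrite leNgt vt_lt.
Qed.

Lemma fnat_above_vtheta t : vtheta f < t%:E ->
  fnat f t = t%:E * ratio_inf f /\ t%:E * ratio_inf f < f t.
Proof.
move=> vt_lt; have Mt := running_inf_above_vtheta vt_lt.
rewrite fnatE Mt adde0 ratio_infE -EFinM [(t * G)%R]mulrC; split => //.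
have h_gt0 : 0 < h t.
  rewrite lt_neqAle h_ge0 andbT; apply/negP => /eqP h0.
  have : t%:E <= vtheta f.
    by apply: ereal_sup_ubound; exists t => //=; rewrite fnat_eq_f // Mt h0.
  by rewrite leNgt vt_lt.
move: h_gt0; rewrite fE; case: (h t) => [b||] // b0.
  by rewrite -EFinD lte_fin ltrDl -lte_fin.
by rewrite addey // ltry.
Qed.

(* Right of [vtheta] the running infimum of [h] vanishes; left of it, it equals [h]. *)
Lemma near_vtheta v (e eps : R) : vtheta f = v%:E -> (0 < e)%R -> (0 < eps)%R ->
  exists2 y, (`|y - v| < e)%R & h y < eps%:E.
Proof.
move=> vtE e0 eps0; have v0 : (0 <= v)%R by rewrite -lee_fin -vtE vtheta_ge0.
have Mv_lt : M (v + e / 2)%R < eps%:E.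
  by rewrite running_inf_above_vtheta ?vtE ?lte_fin ?ltrDl ?divr_gt0.
have [x [d [/andP[x0 xv] hx deps]]] := running_inf_ltP h_ge0 Mv_lt.
case: (ltP (v - e)%R x) => vx.
  by exists x; rewrite ?hx ?lte_fin // ltr_norml; apply/andP; split; lra.
have z0 : (0 <= v - e / 2)%R by lra.
exists (v - e / 2)%R; first by rewrite ltr_norml; apply/andP; split; lra.
rewrite -(running_inf_eq_of_fnat (esym (fnat_eq_f_below_vtheta z0 _))); last first.
  by rewrite vtE lte_fin; lra.
by apply: le_lt_trans (running_inf_le h x0 _) _; rewrite ?hx ?lte_fin //; lra.
Qed.

Lemma clf_vtheta v : vtheta f = v%:E -> clf f v = v%:E * ratio_inf f.
Proof.
move=> vtE; rewrite ratio_infE -EFinM mulrC; apply/eqP; rewrite eq_le.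
rewrite (clf_ge_linear f_ge_linear) andbT; apply: clf_le_of_approx => e eps e0 eps0.
have G1 : (0 < 2 * (`|G| + 1))%R by apply: mulr_gt0 => //; apply: ltr_pwDr.
pose k := (eps / (2 * (`|G| + 1)))%R.
have k0 : (0 < k)%R by apply: divr_gt0.
have kE : (k * (2 * (`|G| + 1)) = eps)%R by rewrite /k divfK ?gt_eqF.
have ek0 : (0 < Num.min e k)%R by rewrite lt_min e0 k0.
have eps2 : (0 < eps / 2)%R by apply: divr_gt0.
have [y yv hy] := near_vtheta vtE ek0 eps2.
exists y; first by apply: lt_le_trans yv _; rewrite ge_min lexx.
rewrite fE; apply: le_trans (leeD2l _ (ltW hy)) _; rewrite -EFinD lee_fin.
have : (G * (y - v) <= `|G| * k)%R.
  apply: le_trans (ler_norm _) _; rewrite normrM; apply: ler_wpM2l => //.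
  by apply: ltW; apply: lt_le_trans yv _; rewrite ge_min lexx orbT.
by move: kE; rewrite mulrBr !mulrDr mulr1; nra.
Qed.

Lemma fnat_vtheta_eq_psi v : vtheta f = v%:E ->
  v%:E = ereal_inf [set t%:E | t in Phi f] -> fnat f v = f v.
Proof.
move=> vtE vpsi; have v0 : (0 <= v)%R by rewrite -lee_fin -vtE vtheta_ge0.
apply: fnat_eq_f; apply/eqP; rewrite eq_le running_inf_le //=.
apply: le_ereal_inf_tmp => _ [x /andP[x0 xv] <-].
have [->|xv'] := eqVneq x v; first by [].
case: (neqNy_cases (f_neqNy x)) => [fx|[a fa]]; first by rewrite /h fx addye ?leey.
have : v%:E <= x%:E by rewrite vpsi; apply: ereal_inf_lbound; exists x; rewrite // /Phi /= fa ltry.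
by rewrite lee_fin leNgt lt_neqAle xv' xv.
Qed.

(* [M] is convex, vanishes beyond [vtheta] and is finite at a point [p < vtheta]
   of [Phi f], so it vanishes at [vtheta] too. *)
Lemma fnat_vtheta_gt_psi v : vtheta f = v%:E ->
  ereal_inf [set t%:E | t in Phi f] < v%:E -> fnat f v = v%:E * ratio_inf f.
Proof.
move=> vtE /ereal_inf_lt [_ [p fp <-]]; rewrite lte_fin => pv.
have p0 : (0 <= p)%R by rewrite leNgt; apply/negP => /f_neg fpy; rewrite /Phi /= fpy ltxx in fp.
have Mp : M p < +oo.
  apply: le_lt_trans (running_inf_le h p0 (lexx p)) _.
  case: (neqNy_cases (f_neqNy p)) => [fpy|[a fa]]; first by rewrite /Phi /= fpy ltxx in fp.
  by rewrite /h fa -EFinB ltry.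
have Mv : M v = 0.
  apply: (econvex_eq0_of_eq0_right (econvex_running_inf h_ge0 h_convex) _ pv Mp).
    exact: running_inf_ge0.
  by move=> t vt; apply: running_inf_above_vtheta; rewrite vtE lte_fin.
by rewrite fnatE Mv adde0 ratio_infE -EFinM mulrC.
Qed.

Lemma ratio_inf_fnat_fin : ratio_inf (fnat f) = ratio_inf f.
Proof.
apply/eqP; rewrite eq_le; apply/andP; split; last first.
  apply: le_ereal_inf_tmp => _ [t t0 <-]; rewrite ratio_infE /ratio fnatE.
  have : (G * t)%:E <= (G * t)%:E + M t by rewrite leeDl // running_inf_ge0.
  move=> /(lee_wpmul2r (_ : 0 <= (t^-1)%:E)); rewrite lee_fin invr_ge0 ltW // => /(_ isT).
  by rewrite -EFinM mulfK ?gt_eqF.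
apply: le_ereal_inf_tmp => _ [t t0 <-].
apply: (@le_trans _ _ (ratio (fnat f) t)); first by apply: ereal_inf_lbound; exists t.
by apply: lee_wpmul2r; [rewrite lee_fin invr_ge0 ltW | exact: fnat_le].
Qed.

Lemma ratio_inf_lsc v : vtheta f = v%:E -> (0 < v)%R -> lsc_at f v ->
  ratio_inf f = ratio f v.
Proof.
move=> vtE v0 f_lsc; have clfE := clf_vtheta vtE.
rewrite ratio_infE -EFinM in clfE.
have fv : f v = (v * G)%:E.
  by apply/eqP; rewrite eq_le (lsc_at_le_clf f_lsc clfE) -clfE clf_le.
by rewrite /ratio fv -EFinM mulrAC divff ?gt_eqF // mul1r.
Qed.

Lemma ratio_cvg_vtheta_pinfty : vtheta f = +oo ->
  ratio f t @[t --> +oo%R] --> ratio_inf f.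
Proof.
move=> vt_y.
have f_fnat t : (0 < t)%R -> f t = fnat f t.
  by move=> t0; rewrite fnat_eq_f_below_vtheta ?vt_y ?ltry // ltW.
have ratio_anti x y : (0 < x)%R -> (x <= y)%R -> ratio f y <= ratio f x.
  move=> x0 xy; have [_ _ _ fnat_ratio] := admissible_running_inf.
  by rewrite /ratio !f_fnat ?(lt_le_trans x0 xy) // !fnatE; apply: fnat_ratio.
pose k (t : R) := ratio f (Num.max t 1%R).
have max_gt0 (t : R) : (0 < Num.max t 1%R)%R.
  by apply: (@lt_le_trans _ _ 1%R); rewrite ?ltr01 // le_max lexx orbT.
have k_anti : {homo k : a b / (a <= b)%R >-> b <= a}.
  by move=> a b ab; apply: ratio_anti => //; rewrite ge_max !le_max ab lexx !orbT.
have infk : ereal_inf (range k) = ratio_inf f.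
  apply/eqP; rewrite eq_le; apply/andP; split.
    apply: le_ereal_inf_tmp => _ [t t0 <-].
    apply: (@le_trans _ _ (k t)); first by apply: ereal_inf_lbound; exists t.
    by apply: ratio_anti => //; rewrite le_max lexx.
  by apply: le_ereal_inf_tmp => _ [t _ <-]; apply: ratio_inf_le.
rewrite -infk; apply: cvg_trans (nonincreasing_cvge k_anti); apply: near_eq_cvg.
exists 1%R; split; first exact: num_real.
by move=> t t1 /=; rewrite /k max_l // ltW.
Qed.

End FiniteRatioInf.

Lemma ratio_inf_fin : ratio_inf f != -oo -> exists G : R, ratio_inf f = G%:E.
Proof. by move: ratio_inf_lt_pinfty; case: (ratio_inf f) => // G; exists G. Qed.

Lemma ratio_inf_neqNy_of_vtheta : vtheta f != -oo -> ratio_inf f != -oo.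
Proof. by apply: contra => /eqP/vtheta_Ny ->. Qed.

Lemma ratio_inf_fnat : ratio_inf (fnat f) = ratio_inf f.
Proof.
have [/eqP ratioNy|/ratio_inf_fin [G ratioE]] := boolP (ratio_inf f == -oo).
  rewrite ratioNy; apply/eqP; rewrite -leeNy_eq.
  apply: (@le_trans _ _ (ratio (fnat f) 1%R)).
    by apply: ereal_inf_lbound; exists 1%R; rewrite //= ltr01.
  by rewrite /ratio fnat_Ny // invr1 mule1.
exact: ratio_inf_fnat_fin ratioE.
Qed.

Lemma vtheta_ge0_fnat_eq_f : ratio_inf f != -oo ->
  0 <= vtheta f /\ forall t : R, (0 <= t)%R -> t%:E < vtheta f -> fnat f t = f t.
Proof.
move=> /ratio_inf_fin [G ratioE]; split; first exact: vtheta_ge0 ratioE.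
move=> t t0 tv; exact: (fnat_eq_f_below_vtheta ratioE t0 tv).
Qed.

Lemma fnat_from_vtheta v : vtheta f = v%:E ->
  [/\ forall t : R, (v < t)%R -> fnat f t = t%:E * ratio_inf f /\ t%:E * ratio_inf f < f t,
      v%:E = ereal_inf [set t%:E | t in Phi f] ->
        [/\ fnat f v = f v, clf f v <= f v & clf f v = v%:E * ratio_inf f]
    & ereal_inf [set t%:E | t in Phi f] < v%:E ->
        [/\ fnat f v = v%:E * ratio_inf f, v%:E * ratio_inf f = clf f v & clf f v <= f v]].
Proof.
move=> vtE; have [G ratioE] : exists G : R, ratio_inf f = G%:E.
  by apply/ratio_inf_fin/ratio_inf_neqNy_of_vtheta; rewrite vtE.
split => [t vt|vpsi|vpsi].
- by apply: (fnat_above_vtheta ratioE); rewrite vtE lte_fin.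
- by rewrite clf_le (clf_vtheta ratioE vtE) (fnat_vtheta_eq_psi ratioE vtE vpsi).
- by rewrite clf_le (clf_vtheta ratioE vtE) (fnat_vtheta_gt_psi ratioE vtE vpsi).
Qed.

Lemma ratio_inf_at_vtheta :
  (forall v : R, vtheta f = v%:E -> (0 < v)%R -> lsc_at f v -> ratio_inf f = ratio f v)
  /\ (vtheta f = +oo -> ratio f t @[t --> +oo%R] --> ratio_inf f).
Proof.
split => [v vtE|vt_y].
  have [G ratioE] : exists G : R, ratio_inf f = G%:E.
    by apply/ratio_inf_fin/ratio_inf_neqNy_of_vtheta; rewrite vtE.
  exact: (ratio_inf_lsc ratioE vtE).
have [G ratioE] : exists G : R, ratio_inf f = G%:E.
  by apply/ratio_inf_fin/ratio_inf_neqNy_of_vtheta; rewrite vt_y.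
exact: (ratio_cvg_vtheta_pinfty ratioE vt_y).
Qed.

End Proposition9.

Theorem proposition9 (R : realType) (f : R -> \bar R)
  (f_nonninfty : forall t, f t != -oo)
  (f_convex : econvex f)
  (f_fin_pos : exists t : R, (0 < t)%R /\ f t < +oo)
  (f_inf_neg : forall t : R, (t < 0)%R -> f t = +oo) :
  let Gamma := Gam (conj f) in
  let vt := vtheta f in
  let psi := ereal_inf [set t%:E | t in Phi f] in
  [/\ Gamma = -oo -> (forall t, fnat f t = -oo) /\ vt = -oo,
      Gamma != -oo ->
        0 <= vt /\ (forall t : R, (0 <= t)%R -> t%:E < vt -> fnat f t = f t),
      forall v : R, vt = v%:E -> (0 <= v)%R ->
        [/\ forall t : R, (v < t)%R -> fnat f t = t%:E * Gamma /\ t%:E * Gamma < f t,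
            v%:E = psi ->
              [/\ fnat f v = f v, clf f v <= f v & clf f v = v%:E * Gamma]
          & psi < v%:E ->
              [/\ fnat f v = v%:E * Gamma, v%:E * Gamma = clf f v & clf f v <= f v]],
      Gamma = ereal_inf [set fnat f t * (t^-1)%:E | t in [set t : R | (0 < t)%R]]
        /\ Gamma = ereal_inf [set f t * (t^-1)%:E | t in [set t : R | (0 < t)%R]]
    &
      (forall v : R, vt = v%:E -> (0 < v)%R -> lsc_at f v ->
        Gamma = f v * (v^-1)%:E)
    /\ (vt = +oo -> f t * (t^-1)%:E @[t --> +oo%R] --> Gamma)].
Proof.
move=> Gamma vt psi; rewrite {}/Gamma {}/vt {}/psi Gam_conj //.
split.
- by move=> ratioNy; split; [apply: fnat_Ny | apply: vtheta_Ny].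
- by apply: vtheta_ge0_fnat_eq_f.
- by move=> v vtE _; apply: fnat_from_vtheta.
- by split; [rewrite -ratio_inf_fnat|].
- by apply: ratio_inf_at_vtheta.
Qed.
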